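(* Under the standing assumptions, the commutator of $R^\beta$ in $R$ satisfies $$V_R(R^\beta)=\bigoplus_{g\in\mathcal G}J_g,$$ i.e. $V_R(R^\beta)=\sum_{g\in\mathcal G}J_g$ and this sum of $C(R)$-submodules of $R$ is direct.
   Context: All rings and algebras are associative and unital. A groupoid is a nonempty set $\mathcal G$ with a partially defined associative multiplication in which every $g$ has an inverse $g^{-1}$, a left identity $r(g)=gg^{-1}$ and a right identity $d(g)=g^{-1}g$; $gh$ is defined iff $d(g)=r(h)$; $\mathcal G_0$ is the set of identities. Standing assumptions: $K$ is a commutative ring, $R$ a $K$-algebra, $\mathcal G$ a finite groupoid, $\beta=(\{E_g\}_{g\in\mathcal G},\{\beta_g\}_{g\in\mathcal G})$ a unital action of $\mathcal G$ on $R$, meaning: for each $g$, $E_g=E_{r(g)}$ is an ideal of $R$ which is a unital ring with identity $1_g$ (so $1_{g^{-1}}=1_{d(g)}$), $\beta_g:E_{g^{-1}}\to E_g$ is a $K$-algebra isomorphism, $\beta_e=\mathrm{id}_{E_e}$ for $e\in\mathcal G_0$, and $\beta_g\beta_h(x)=\beta_{gh}(x)$ whenever $d(g)=r(h)$, $x\in E_{h^{-1}}$. Moreover $R=\bigoplus_{e\in\mathcal G_0}E_e$, and $R$ is a $\beta$-Galois extension of $R^\beta=\{r\in R:\beta_g(r1_{g^{-1}})=r1_g\ \forall g\in\mathcal G\}$, i.e. there exist $x_1,\dots,x_m,y_1,\dots,y_m\in R$ with $\sum_i x_i\beta_g(y_i1_{g^{-1}})=1_g$ if $g\in\mathcal G_0$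 and $=0$ otherwise. $C(R)$ is the center of $R$; for subrings $S_1,S_2$ of $R$, $V_{S_2}(S_1)=\{r\in S_2: rs=sr\ \forall s\in S_1\}$. For $g\in\mathcal G$, $J_g=\{r\in E_g: r\beta_g(x1_{g^{-1}})=xr \text{ for all } x\in R\}$, a $C(R)$-submodule of $R$. *)

From HB Require Import structures.
From mathcomp Require Import all_boot all_order all_algebra.
Set Implicit Arguments. Unset Strict Implicit. Unset Printing Implicit Defensive.
Import GRing.Theory.
Local Open Scope ring_scope.

(* The multiplication [gmul] and
   inverse [ginv] are total functions; [gmul g h] is only meaningful when
   d(g) = r(h), where r(g) = g g^{-1} and d(g) = g^{-1} g. *)
Record groupoid (G : finType) := Groupoid {
  gmul : G -> G -> G;
  ginv : G -> G;
  gr := fun g => gmul g (ginv g);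
  gd := fun g => gmul (ginv g) g;
  gd_inv : forall g, gd (ginv g) = gr g;
  gr_inv : forall g, gr (ginv g) = gd g;
  gmul_d : forall g, gmul g (gd g) = g;
  gmul_r : forall g, gmul (gr g) g = g;
  gd_mul : forall g h, gd g = gr h -> gd (gmul g h) = gd h;
  gr_mul : forall g h, gd g = gr h -> gr (gmul g h) = gr g;
  gmulA : forall g h l, gd g = gr h -> gd h = gr l ->
            gmul (gmul g h) l = gmul g (gmul h l)
}.

Definition gidents (G : finType) (Gd : groupoid G) : {pred G} :=
  fun e => [exists g, gd Gd g == e].

Definition is_ideal (R : pzRingType) (E : R -> Prop) : Prop :=
  [/\ E 0,
      forall x y, E x -> E y -> E (x + y),
      forall x, E x -> E (- x),
      forall a x, E x -> E (a * x) &
      forall a x, E x -> E (x * a)].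

Record unital_action (K : comPzRingType) (R : algType K) (G : finType)
    (Gd : groupoid G) := UnitalAction {
  actE : G -> R -> Prop;
  act1 : G -> R;
  actb : G -> R -> R;             (* g |-> beta_g : E_{g^-1} -> E_g *)
  actE_ideal : forall g, is_ideal (actE g);
  actE_r : forall g, forall x, actE g x <-> actE (gr Gd g) x;
  act1_in : forall g, actE g (act1 g);
  act1_unit : forall g x, actE g x -> act1 g * x = x /\ x * act1 g = x;
  actb_in : forall g x, actE (ginv Gd g) x -> actE g (actb g x);
  actb_add : forall g x y, actE (ginv Gd g) x -> actE (ginv Gd g) y ->
      actb g (x + y) = actb g x + actb g y;
  actb_mul : forall g x y, actE (ginv Gd g) x -> actE (ginv Gd g) y ->
      actb g (x * y) = actb g x * actb g y;
  actb_scale : forall g (k : K) x, actE (ginv Gd g) x ->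
      actb g (k *: x) = k *: actb g x;
  actb_one : forall g, actb g (act1 (ginv Gd g)) = act1 g;
  actb_inj : forall g x y, actE (ginv Gd g) x -> actE (ginv Gd g) y ->
      actb g x = actb g y -> x = y;
  actb_surj : forall g y, actE g y ->
      exists2 x, actE (ginv Gd g) x & actb g x = y;
  actb_id : forall e x, e \in gidents Gd -> actE e x -> actb e x = x;
  actb_comp : forall g h x, gd Gd g = gr Gd h -> actE (ginv Gd h) x ->
      actb g (actb h x) = actb (gmul Gd g h) x
}.

Section ActionDefs.
Variables (K : comPzRingType) (R : algType K) (G : finType) (Gd : groupoid G)
  (b : unital_action R Gd).

Definition action_decomposes : Prop :=
  (forall x : R, exists2 xs : G -> R,
      (forall e, e \in gidents Gd -> actE b e (xs e)) &
      x = \sum_(e in gidents Gd) xs e) /\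
  (forall xs : G -> R, (forall e, e \in gidents Gd -> actE b e (xs e)) ->
      \sum_(e in gidents Gd) xs e = 0 -> forall e, e \in gidents Gd -> xs e = 0).

Definition fixed_ring (r : R) : Prop :=
  forall g, actb b g (r * act1 b (ginv Gd g)) = r * act1 b g.

Definition beta_galois : Prop :=
  exists (m : nat) (x y : 'I_m -> R), forall g,
    \sum_(i < m) x i * actb b g (y i * act1 b (ginv Gd g)) =
      (if g \in gidents Gd then act1 b g else 0).

Definition centralizer (S2 S1 : R -> Prop) (r : R) : Prop :=
  S2 r /\ forall s, S1 s -> r * s = s * r.

Definition center : R -> Prop := centralizer (fun _ => True) (fun _ => True).

Definition Jg (g : G) (r : R) : Prop :=
  actE b g r /\
    forall x : R, r * actb b g (x * act1 b (ginv Gd g)) = x * r.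

End ActionDefs.

From HB Require Import structures.
From mathcomp Require Import all_boot all_order all_algebra.
Set Implicit Arguments. Unset Strict Implicit. Unset Printing Implicit Defensive.
Import GRing.Theory.
Local Open Scope ring_scope.

(* Write beta_g(x) for beta_g(x 1_{g^-1}), a map R -> E_g.  Fix a Galois
   coordinate system (x_i, y_i) and the trace tr(z) = sum_g beta_g(z).
   - Groupoid facts: identities, inverses, and the fact that left translation
     by h reindexes the arrows with target d(h) onto those with target r(h).
   - Since R = (+)_{e in G0} E_e, the 1_e are orthogonal central idempotents
     summing to 1; hence x |-> beta_g(x) is multiplicative and R^beta-linear,
     and each J_g centralizes R^beta.
   - The trace lands in R^beta, and the Galois condition gives the dual basis
     expansions z = sum_j x_j tr(y_j z) = sum_j tr(z x_j) y_j together with the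
     orthogonality sum_i beta_g(x_i) beta_h(y_i) = delta_{g,h} 1_g.
   - For v in V_R(R^beta), the components J_component v h =
     sum_i x_i v beta_h(y_i) lie in J_h and add up to v; conversely the
     components of a sum of elements a_g of J_g are the a_g themselves, which
     makes the sum direct. *)

Section GroupoidFacts.
Variables (G : finType) (Gd : groupoid G).

Local Notation inv := (ginv Gd).
Local Notation mul := (gmul Gd).
Local Notation r := (gr Gd).
Local Notation d := (gd Gd).
Local Notation G0 := (gidents Gd).

Lemma gd_ident g : d g \in G0.
Proof. by apply/existsP; exists g. Qed.

Lemma gr_ident g : r g \in G0.
Proof. by rewrite -gd_inv gd_ident. Qed.

Lemma ident_gd e : e \in G0 -> d e = e.
Proof. by case/existsP=> g /eqP <-; apply: (gd_mul (gd_inv Gd g)). Qed.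

Lemma ident_gr e : e \in G0 -> r e = e.
Proof. by case/existsP=> g /eqP <-; rewrite (gr_mul (gd_inv Gd g)) gr_inv. Qed.

Lemma ident_inv e : e \in G0 -> inv e = e.
Proof.
by move=> He; rewrite -[LHS](gmul_d Gd) gd_inv (ident_gr He) -/(d e) ident_gd.
Qed.

Lemma gmulKV h g : r g = d h -> mul (inv h) (mul h g) = g.
Proof.
move=> rg; rewrite -(gmulA (gd_inv Gd h) (esym rg)) -/(d h) -rg.
exact: (gmul_r Gd).
Qed.

Lemma gmulVK h k : r k = r h -> mul h (mul (inv h) k) = k.
Proof.
move=> rk; rewrite -(gmulA (esym (gr_inv Gd h))) ?gd_inv // -/(r h) -rk.
exact: (gmul_r Gd).
Qed.

Lemma gmulV_ident g h : r h = r g -> (mul (inv g) h \in G0) = (g == h).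
Proof.
move=> rh; apply/idP/eqP => [Hk|<-]; last exact: gd_ident.
have rk : r (mul (inv g) h) = d g.
  by rewrite (gr_mul (_ : d (inv g) = r h)) ?gr_inv // gd_inv rh.
by rewrite -(gmulVK rh) -(ident_gr Hk) rk (gmul_d Gd).
Qed.

Lemma translate_sum (V : nmodType) (h : G) (F : G -> V) :
  \sum_(g | r g == d h) F (mul h g) = \sum_(k | r k == r h) F k.
Proof.
rewrite [RHS](reindex_onto (mul h) (mul (inv h))) /=; last first.
  by move=> k /eqP; apply: gmulVK.
apply: eq_bigl => g; apply/eqP/andP => [rg|[/eqP rhg /eqP hgK]].
  by rewrite (gr_mul (esym rg)) gmulKV.
by rewrite -hgK (gr_mul (_ : d (inv h) = r (mul h g))) ?gr_inv // gd_inv rhg.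
Qed.

End GroupoidFacts.

Arguments gd_ident {G Gd} g.
Arguments gr_ident {G Gd} g.
Arguments translate_sum {G Gd V} h F.

Section GroupoidAction.
Variables (K : comPzRingType) (R : algType K) (G : finType) (Gd : groupoid G)
  (b : unital_action R Gd).

Local Notation inv := (ginv Gd).
Local Notation mul := (gmul Gd).
Local Notation r := (gr Gd).
Local Notation d := (gd Gd).
Local Notation G0 := (gidents Gd).
Local Notation E g := (actE b g).
Local Notation one := (act1 b).
Local Notation be := (actb b).

(* The map x |-> beta_g(x 1_{g^-1}) from R to E_g, through which beta_g acts
   on all of R in the definitions of R^beta, J_g and the Galois condition. *)
Local Notation beta g x := (be g (x * one (inv g))).

Lemma E0 g : E g 0.
Proof. by case: (actE_ideal b g). Qed.

Lemma ED g x y : E g x -> E g y -> E g (x + y).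
Proof. by case: (actE_ideal b g) => _ D _ _ _; apply: D. Qed.

Lemma EN g x : E g x -> E g (- x).
Proof. by case: (actE_ideal b g) => _ _ N _ _; apply: N. Qed.

Lemma EMl g a x : E g x -> E g (a * x).
Proof. by case: (actE_ideal b g) => _ _ _ M _; apply: M. Qed.

Lemma EMr g a x : E g x -> E g (x * a).
Proof. by case: (actE_ideal b g) => _ _ _ _ M; apply: M. Qed.

Lemma E_sum g (I : finType) (P : pred I) (F : I -> R) :
  (forall i, P i -> E g (F i)) -> E g (\sum_(i | P i) F i).
Proof.
move=> EF; elim/big_rec: _ => [|i x Pi Ex]; first exact: E0.
by apply: ED => //; apply: EF.
Qed.

Lemma E_gr_eq g h x : r g = r h -> E g x -> E h x.
Proof. by move=> rgh /(actE_r b g); rewrite rgh => /(actE_r b h). Qed.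

Lemma E_ginv g x : E (inv g) x <-> E (d g) x.
Proof.
have rd : r (inv g) = r (d g) by rewrite gr_inv (ident_gr (gd_ident g)).
by split; apply: E_gr_eq.
Qed.

Lemma one_mull g x : E g x -> one g * x = x.
Proof. by case/act1_unit. Qed.

Lemma one_mulr g x : E g x -> x * one g = x.
Proof. by case/act1_unit. Qed.

(* The identity of the ring E_g is determined by E_g, hence by r(g). *)
Lemma one_gr_eq g h : r g = r h -> one g = one h.
Proof.
move=> rgh.
have Eg : E g (one h) by apply: E_gr_eq (esym rgh) (act1_in b h).
have Eh : E h (one g) by apply: E_gr_eq rgh (act1_in b g).
by rewrite -(one_mull Eg) (one_mulr Eh).
Qed.

Lemma one_gr g : one g = one (r g).
Proof. by apply: one_gr_eq; rewrite (ident_gr (gr_ident g)). Qed.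

Lemma one_ginv g : one (inv g) = one (d g).
Proof. by rewrite one_gr gr_inv. Qed.

Lemma one_idem g : one g * one g = one g.
Proof. exact: one_mull (act1_in b g). Qed.

Lemma actb0 g : be g 0 = 0.
Proof.
have E0g := E0 (inv g).
by apply: (@addrI _ (be g 0)); rewrite -(actb_add E0g E0g) !addr0.
Qed.

Lemma actb_sum g (I : finType) (P : pred I) (F : I -> R) :
  (forall i, P i -> E (inv g) (F i)) ->
  be g (\sum_(i | P i) F i) = \sum_(i | P i) be g (F i).
Proof.
move=> EF; suff [] : E (inv g) (\sum_(i | P i) F i) /\
    be g (\sum_(i | P i) F i) = \sum_(i | P i) be g (F i) by [].
apply: (big_rec2 (fun s t => E (inv g) s /\ be g s = t)).
  by split; [apply: E0 | apply: actb0].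
move=> i s t Pi [Es <-].
by split; [exact: ED (EF i Pi) Es | exact: actb_add (EF i Pi) Es].
Qed.

Lemma beta_in g x : E g (beta g x).
Proof. by apply: actb_in; apply: EMl (act1_in b _). Qed.

Lemma beta_ident e x : e \in G0 -> beta e x = x * one e.
Proof.
move=> He; rewrite (ident_inv He) (actb_id He) //.
exact: EMl (act1_in b e).
Qed.

Lemma beta_comp g k y : d g = r k -> beta (mul g k) y = be g (beta k y).
Proof.
move=> dgk; rewrite (actb_comp dgk); last by apply: EMl; apply: act1_in.
by rewrite !one_ginv (gd_mul dgk).
Qed.

Lemma beta_actbM g a z : E (inv g) z -> beta g a * be g z = be g (a * z).
Proof.
move=> Ez; have Ea := EMl a (act1_in b (inv g)).
by rewrite -(actb_mul Ea Ez) -mulrA (one_mull Ez).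
Qed.

Hypothesis decomp : action_decomposes b.

(* The decomposition R = (+)_{e in G0} E_e makes distinct E_e's intersect
   trivially, so elements of E_g and E_h multiply to 0 unless r(g) = r(h). *)
Lemma E_ident_disjoint e f x :
  e \in G0 -> f \in G0 -> e != f -> E e x -> E f x -> x = 0.
Proof.
move=> He Hf nef Ex Fx.
pose xs k := if k == e then x else if k == f then - x else 0.
have := decomp.2 xs _ _ e He; rewrite /xs eqxx; apply.
  move=> k _; case: eqP => [->//|_].
  by case: eqP => [->|_]; [exact: EN | exact: E0].
rewrite (bigD1 e) //= eqxx (bigD1 f) /=; last by rewrite Hf eq_sym.
rewrite eq_sym (negbTE nef) eqxx big1 ?addr0 ?subrr //.
move=> k /andP[/andP[_ ke] kf].
by rewrite (negbTE ke) (negbTE kf).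
Qed.

Lemma E_orth g h x y : r g != r h -> E g x -> E h y -> x * y = 0.
Proof.
move=> ngh Ex Ey; apply: (E_ident_disjoint (gr_ident g) (gr_ident h) ngh).
  by apply/(actE_r b g); apply: EMr.
by apply/(actE_r b h); apply: EMl.
Qed.

Lemma one_central g x : one g * x = x * one g.
Proof.
have [xs Exs ->] := decomp.1 x; rewrite mulr_sumr mulr_suml.
apply: eq_bigr => e He; have [reg|neg] := eqVneq (r e) (r g).
  have Ee : E g (xs e) by apply: E_gr_eq reg (Exs e He).
  by rewrite (one_mull Ee) (one_mulr Ee).
have [Ee Eg] := (Exs e He, act1_in b g).
by rewrite (E_orth neg Ee Eg) (E_orth _ Eg Ee) // eq_sym.
Qed.

Lemma sum_one : \sum_(e in G0) one e = 1.
Proof.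
have [xs Exs def1] := decomp.1 1.
rewrite [RHS]def1; apply: eq_bigr => f Hf.
rewrite -[LHS]mulr1 def1 mulr_sumr (bigD1 f) //= big1 ?addr0.
  exact: one_mull (Exs f Hf).
move=> e /andP[He nef]; apply: E_orth (act1_in b f) (Exs e He).
by rewrite (ident_gr Hf) (ident_gr He) eq_sym.
Qed.

Lemma betaM g x y : beta g (x * y) = beta g x * beta g y.
Proof.
have Ex z : E (inv g) (z * one (inv g)) by apply: EMl; apply: act1_in.
rewrite -(actb_mul (Ex x) (Ex y)); congr (be g _).
rewrite mulrA -(mulrA x (one _)) one_central mulrA.
by rewrite -[_ * one _ * one _]mulrA one_idem.
Qed.

Lemma beta_sum g (I : finType) (P : pred I) (F : I -> R) :
  beta g (\sum_(i | P i) F i) = \sum_(i | P i) beta g (F i).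
Proof.
by rewrite mulr_suml actb_sum // => i _; apply: EMl; apply: act1_in.
Qed.

Lemma beta_fixed g t y : fixed_ring b t -> beta g (t * y) = t * beta g y.
Proof. by move=> Ht; rewrite betaM (Ht g) -mulrA (one_mull (beta_in g y)). Qed.

Lemma J_centralizes g a s : Jg b g a -> fixed_ring b s -> a * s = s * a.
Proof.
by case=> Ea Ja Hs; rewrite -Ja (Hs g) -(one_central g s) mulrA (one_mulr Ea).
Qed.

Definition trace (z : R) : R := \sum_(g : G) beta g z.

Lemma trace_cut z e :
  e \in G0 -> trace z * one e = \sum_(g | r g == e) beta g z.
Proof.
move=> He; rewrite mulr_suml [RHS]big_mkcond; apply: eq_bigr => g _.
have Ebr : E (r g) (beta g z) by apply/(actE_r b g); apply: beta_in.
case: eqP => [<-|/eqP ne]; first exact: (one_mulr Ebr).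
apply: E_orth Ebr (act1_in b e).
by rewrite (ident_gr He) (ident_gr (gr_ident g)).
Qed.

Lemma trace_fixed z : fixed_ring b (trace z).
Proof.
move=> h; rewrite one_ginv trace_cut ?gd_ident // one_gr.
rewrite trace_cut ?gr_ident // -(translate_sum h (fun k => beta k z)) actb_sum.
  by apply: eq_bigr => g /eqP rg; rewrite beta_comp ?rg.
move=> g /eqP rg; apply/E_ginv; apply: E_gr_eq (beta_in g z).
by rewrite rg (ident_gr (gd_ident h)).
Qed.

Lemma trace_idents z : \sum_(e in G0) beta e z = z.
Proof.
under eq_bigr => e He do rewrite beta_ident //.
by rewrite -mulr_sumr sum_one mulr1.
Qed.

Variables (m : nat) (x_ y_ : 'I_m -> R).
Hypothesis galois_basis : forall g,
  \sum_(i < m) x_ i * beta g (y_ i) = if g \in G0 then one g else 0.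

Lemma galois_orth g h :
  \sum_i beta g (x_ i) * beta h (y_ i) = if g == h then one g else 0.
Proof.
have [rhg|nrhg] := eqVneq (r h) (r g); last first.
  have ngh : g != h by apply: contraNneq nrhg => ->.
  rewrite (negbTE ngh) big1 // => i _.
  by apply: E_orth (beta_in g _) (beta_in h _); rewrite eq_sym.
have dgk : d g = r (mul (inv g) h).
  by rewrite (gr_mul (_ : d (inv g) = r h)) ?gr_inv // gd_inv rhg.
have Ek y : E (inv g) (beta (mul (inv g) h) y).
  apply/E_ginv; apply: E_gr_eq (beta_in _ y).
  by rewrite -dgk (ident_gr (gd_ident g)).
transitivity (be g (\sum_i x_ i * beta (mul (inv g) h) (y_ i))).
  rewrite actb_sum => [|i _]; last exact: EMl.
  apply: eq_bigr => i _.
  by rewrite -[in LHS](gmulVK rhg) (beta_comp _ dgk) beta_actbM.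
rewrite galois_basis gmulV_ident //; case: eqP => [<-|_]; last exact: actb0.
by rewrite -/(d g) -one_ginv actb_one.
Qed.

(* Summing the orthogonality relations over h in G0 gives the Galois identity
   with the roles of the x_i and the y_i exchanged. *)
Lemma galois_basis_swap g :
  \sum_i beta g (x_ i) * y_ i = if g \in G0 then one g else 0.
Proof.
transitivity (\sum_(e in G0) if g == e then one g else 0).
  rewrite -[LHS]mulr1 -sum_one !mulr_sumr; apply: eq_bigr => e He.
  rewrite -galois_orth mulr_suml; apply: eq_bigr => i _.
  by rewrite (beta_ident _ He) mulrA.
case: (boolP (g \in G0)) => Hg; last first.
  by rewrite big1 // => e He; case: eqP => // ge; rewrite ge He in Hg.
rewrite (bigD1 g) //= eqxx big1 ?addr0 // => e /andP[_ /negbTE].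
by rewrite eq_sym => ->.
Qed.

(* Dual basis expansions z = sum_j x_j tr(y_j z) and w = sum_i tr(w x_i) y_i,
   with coefficients in R^beta by trace_fixed. *)
Lemma dual_basis_left z : \sum_j x_ j * trace (y_ j * z) = z.
Proof.
transitivity (\sum_g (if g \in G0 then one g else 0) * beta g z).
  under eq_bigr => j _ do rewrite mulr_sumr.
  rewrite exchange_big; apply: eq_bigr => g _.
  rewrite -galois_basis mulr_suml; apply: eq_bigr => j _.
  by rewrite betaM mulrA.
rewrite -[RHS]trace_idents [RHS]big_mkcond; apply: eq_bigr => g _.
by case: ifP => _; [exact: one_mull (beta_in g z) | exact: mul0r].
Qed.

Lemma dual_basis_right w : \sum_i trace (w * x_ i) * y_ i = w.
Proof.
transitivity (\sum_g beta g w * (if g \in G0 then one g else 0)).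
  under eq_bigr => i _ do rewrite mulr_suml.
  rewrite exchange_big; apply: eq_bigr => g _.
  rewrite -galois_basis_swap mulr_sumr; apply: eq_bigr => i _.
  by rewrite betaM mulrA.
rewrite -[RHS]trace_idents [RHS]big_mkcond; apply: eq_bigr => g _.
by case: ifP => _; [exact: one_mulr (beta_in g w) | exact: mulr0].
Qed.

(* The h-component of v: the projection of V_R(R^beta) onto J_h. *)
Definition J_component (v : R) (h : G) : R := \sum_i x_ i * v * beta h (y_ i).

Section Centralizer.
Variable v : R.
Hypothesis v_central : forall s, fixed_ring b s -> v * s = s * v.

Lemma J_component_in h : Jg b h (J_component v h).
Proof.
split; first by apply: E_sum => i _; apply: EMl; apply: beta_in.
move=> x; rewrite mulr_suml mulr_sumr.
transitivity (\sum_j x_ j * v * beta h (\sum_i trace (y_ j * x * x_ i) * y_ i)).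
  by apply: eq_bigr => j _; rewrite dual_basis_right betaM mulrA.
under eq_bigr => j _ do rewrite beta_sum mulr_sumr.
rewrite exchange_big; apply: eq_bigr => i _.
rewrite [RHS]mulrA [x * _]mulrA -(dual_basis_left (x * x_ i)) !mulr_suml.
apply: eq_bigr => j _.
rewrite beta_fixed; last exact: trace_fixed.
by rewrite !mulrA -(mulrA (x_ j) v) (v_central (trace_fixed _)) mulrA.
Qed.

Lemma sum_J_component : \sum_h J_component v h = v.
Proof.
rewrite exchange_big /= -[RHS]mul1r -[in RHS](dual_basis_left 1) mulr_suml.
apply: eq_bigr => i _; rewrite -mulr_sumr mulr1 -!mulrA; congr (_ * _).
exact: v_central (trace_fixed _).
Qed.

End Centralizer.

(* A family (a_g) with a_g in J_g is recovered from its sum: the components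
   of the sum are the a_g, so the sum of the J_g is direct. *)
Lemma J_component_sum (a : G -> R) h :
  (forall g, Jg b g (a g)) -> J_component (\sum_g a g) h = a h.
Proof.
move=> Ja; rewrite /J_component.
transitivity (\sum_g a g * (if g == h then one g else 0)).
  under [RHS]eq_bigr => g _ do rewrite -galois_orth mulr_sumr.
  rewrite exchange_big /=; apply: eq_bigr => i _.
  rewrite mulr_sumr mulr_suml; apply: eq_bigr => g _.
  by rewrite mulrA ((Ja g).2 (x_ i)).
rewrite (bigD1 h) //= eqxx big1 ?addr0; first exact: one_mulr (Ja h).1.
by move=> g /negbTE ->; rewrite mulr0.
Qed.

End GroupoidAction.

Theorem lemma3p1 (K : comPzRingType) (R : algType K) (G : finType)
  (Gd : groupoid G) (b : unital_action R Gd)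
  (Hdec : action_decomposes b) (Hgal : beta_galois b) :
  (forall v : R, centralizer (fun _ => True) (fixed_ring b) v <->
     exists2 a : G -> R, (forall g, Jg b g (a g)) & v = \sum_(g : G) a g) /\
  (forall a : G -> R, (forall g, Jg b g (a g)) ->
     \sum_(g : G) a g = 0 -> forall g, a g = 0).
Proof.
have [m [x [y galois]]] := Hgal.
split=> [v|a Ja sum0 g]; last first.
  rewrite -(J_component_sum Hdec galois g Ja) sum0.
  by rewrite /J_component big1 // => i _; rewrite mulr0 mul0r.
split=> [[_ v_central]|[a Ja ->]].
  exists (J_component b x y v) => [g|]; first exact: J_component_in.
  by rewrite sum_J_component.
split=> // s Hs; rewrite mulr_suml mulr_sumr; apply: eq_bigr => g _.
exact: J_centralizes (Ja g) Hs.
Qed.
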